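(* Let $d\ge1$, $K\ge2$, $n\ge1$ be integers and let $(\mathbf W^\star,\mathbf H^\star)$ be an optimal solution of $$\min_{\mathbf W\in\mathrm{OB}(d,K),\ \mathbf H\in\mathrm{OB}(d,nK)}\ \mathcal L_{\mathrm{HardMax}}(\mathbf W,\mathbf H).$$ Then $\mathbf W^\star$ is a Softmax Code, i.e. $\mathbf W^\star\in\operatorname{argmax}_{\mathbf W\in\mathrm{OB}(d,K)}\rho_{\text{one-vs-rest}}(\mathbf W)$.
   Context: $\mathrm{OB}(d,m)$ is the set of real $d\times m$ matrices with unit-norm columns. $\mathbf W\in\mathrm{OB}(d,K)$ has columns $\mathbf w_1,\dots,\mathbf w_K$; $\mathbf H\in\mathrm{OB}(d,nK)$ has columns $\mathbf h_{k,i}$, $k\in[K],i\in[n]$. $\mathcal L_{\mathrm{HardMax}}(\mathbf W,\mathbf H)=\max_{k\in[K]}\max_{i\in[n]}\max_{k'\ne k}\langle \mathbf w_{k'}-\mathbf w_k,\mathbf h_{k,i}\rangle$. For a point $\mathbf v$ and a finite set $\mathcal W$, $\operatorname{dist}(\mathbf v,\mathcal W)=\inf\{\|\mathbf v-\mathbf w\|_2:\mathbf w\in\operatorname{conv}(\mathcal W)\}$. $\rho_{\text{one-vs-rest}}(\mathbf W)=\min_{k\in[K]}\operatorname{dist}(\mathbf w_k,\{\mathbf w_j\}_{j\in[K]\setminus\{k\}})$. A Softmax Code is any maximizer of $\rho_{\text{one-vs-rest}}$ over $\mathrm{OB}(d,K)$. *)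

From HB Require Import structures.
From mathcomp Require Import all_boot all_order all_algebra.
From mathcomp Require Import boolp classical_sets reals.
Set Implicit Arguments. Unset Strict Implicit. Unset Printing Implicit Defensive.
Import Order.TTheory GRing.Theory Num.Theory.
Local Open Scope ring_scope.

Section Defs.
Variable R : realType.

Definition dotv (d : nat) (u v : 'cV[R]_d) : R := \sum_(l < d) u l 0 * v l 0.
Definition norm2 (d : nat) (v : 'cV[R]_d) : R := Num.sqrt (dotv v v).

Definition OB (d m : nat) (A : 'M[R]_(d, m)) : Prop :=
  forall j : 'I_m, norm2 (col j A) = 1.

Definition hcol (d K n : nat) (H : 'M[R]_(d, K * n)) (k : 'I_K) (i : 'I_n)
  : 'cV[R]_d := col (mxvec_index k i) H.

(* L_HardMax(W,H) = max_k max_i max_{k'<>k} <w_k' - w_k, h_{k,i}>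
   (a maximum over a finite set, written as its supremum) *)
Definition HardMax (d K n : nat) (W : 'M[R]_(d, K)) (H : 'M[R]_(d, K * n)) : R :=
  sup [set x : R | exists (k : 'I_K) (i : 'I_n) (k' : 'I_K),
         k' != k /\ x = dotv (col k' W - col k W) (hcol H k i)]%classic.

Definition conv_others (d K : nat) (W : 'M[R]_(d, K)) (k : 'I_K) (w : 'cV[R]_d)
  : Prop :=
  exists a : 'I_K -> R,
    (forall j, 0 <= a j) /\ a k = 0 /\ \sum_(j < K) a j = 1 /\
    w = \sum_(j < K) a j *: col j W.

Definition dist_others (d K : nat) (W : 'M[R]_(d, K)) (k : 'I_K) : R :=
  inf [set x : R | exists w, conv_others W k w /\ x = norm2 (col k W - w)]%classic.

Definition rho_ovr (d K : nat) (W : 'M[R]_(d, K)) : R :=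
  inf [set x : R | exists k : 'I_K, x = dist_others W k]%classic.

Definition softmax_code (d K : nat) (W : 'M[R]_(d, K)) : Prop :=
  OB W /\ forall W' : 'M[R]_(d, K), OB W' -> rho_ovr W' <= rho_ovr W.

Definition hardmax_optimal (d K n : nat) (W : 'M[R]_(d, K)) (H : 'M[R]_(d, K * n))
  : Prop :=
  OB W /\ OB H /\
  forall (W' : 'M[R]_(d, K)) (H' : 'M[R]_(d, K * n)),
    OB W' -> OB H' -> HardMax W H <= HardMax W' H'.

End Defs.

From HB Require Import structures.
From mathcomp Require Import all_boot all_order all_algebra.
From mathcomp Require Import boolp classical_sets reals.
From mathcomp Require Import ring lra.
Import Order.TTheory GRing.Theory Num.Theory.
Set Implicit Arguments. Unset Strict Implicit. Unset Printing Implicit Defensive.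
Local Open Scope ring_scope.

(* For unit-norm [W], the infimum of [HardMax W H] over unit-norm [H] is
   [- rho_ovr W].  It is at least that: a convex combination [w] of the other
   columns has [<w - w_k, h_{k,i}> <= HardMax W H], while
   [<w - w_k, h> >= - |w_k - w|] for a unit [h].  It is at most that: take
   every [h_{k,i}] to be the unit direction from a near-nearest point of the
   hull of [{w_j}_(j != k)] to [w_k]; by convexity of the hull, every
   [<w_j - w_k, h>] is then at most [- dist(w_k, ...) + eps].  Comparing an
   optimal [W*] with any [W'] through these two bounds gives
   [rho_ovr W' <= rho_ovr W* + eps] for all [eps > 0]. *)

Section Dotv.
Variables (R : realType) (d : nat).
Implicit Types (u v w h : 'cV[R]_d) (a : R).

Lemma dotvC u v : dotv u v = dotv v u.
Proof. by apply: eq_bigr => l _; rewrite mulrC. Qed.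

Lemma dotvDl u v w : dotv (u + v) w = dotv u w + dotv v w.
Proof. by rewrite /dotv -big_split; apply: eq_bigr => l _; rewrite !mxE mulrDl. Qed.

Lemma dotvZl a u w : dotv (a *: u) w = a * dotv u w.
Proof. by rewrite /dotv mulr_sumr; apply: eq_bigr => l _; rewrite !mxE mulrA. Qed.

Lemma dotvNl u w : dotv (- u) w = - dotv u w.
Proof. by rewrite -scaleN1r dotvZl mulN1r. Qed.

Lemma dotvBl u v w : dotv (u - v) w = dotv u w - dotv v w.
Proof. by rewrite dotvDl dotvNl. Qed.

Lemma dotvDr u v w : dotv w (u + v) = dotv w u + dotv w v.
Proof. by rewrite !(dotvC w) dotvDl. Qed.

Lemma dotvZr a u w : dotv w (a *: u) = a * dotv w u.
Proof. by rewrite !(dotvC w) dotvZl. Qed.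

Lemma dotvBr u v w : dotv w (u - v) = dotv w u - dotv w v.
Proof. by rewrite !(dotvC w) dotvBl. Qed.

Lemma dotv_suml (m : nat) (a : 'I_m -> R) (c : 'I_m -> 'cV[R]_d) w :
  dotv (\sum_(j < m) a j *: c j) w = \sum_(j < m) a j * dotv (c j) w.
Proof.
elim/big_ind2: _ => //.
- by rewrite /dotv big1 // => l _; rewrite mxE mul0r.
- by move=> x1 y1 x2 y2 <- <-; rewrite dotvDl.
- by move=> j _; rewrite dotvZl.
Qed.

Lemma dotv_ge0 u : 0 <= dotv u u.
Proof. by apply: sumr_ge0 => l _; rewrite -expr2 sqr_ge0. Qed.

Lemma norm2_ge0 u : 0 <= norm2 u.
Proof. exact: sqrtr_ge0. Qed.

Lemma sqr_norm2 u : norm2 u ^+ 2 = dotv u u.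
Proof. by rewrite /norm2 sqr_sqrtr // dotv_ge0. Qed.

Lemma norm2_unit h : norm2 h = 1 -> dotv h h = 1.
Proof. by move=> h1; rewrite -sqr_norm2 h1 expr1n. Qed.

Lemma norm2B u v : norm2 (u - v) = norm2 (v - u).
Proof. by rewrite /norm2 -opprB dotvNl !(dotvC _ (- _)) dotvNl opprK. Qed.

Lemma dotv_sqr_expand u v a :
  dotv (u - a *: v) (u - a *: v) = dotv u u - 2 * a * dotv u v + a ^+ 2 * dotv v v.
Proof. by rewrite dotvBl !dotvBr !dotvZl !dotvZr (dotvC v u); ring. Qed.

Lemma dotv_sqrD_le u v : dotv (u + v) (u + v) <= 2 * dotv u u + 2 * dotv v v.
Proof.
have := dotv_ge0 (u - v).
by rewrite dotvBl !dotvBr !dotvDl !dotvDr (dotvC v u); lra.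
Qed.

Lemma dotv_sqrB_le u v : dotv (u - v) (u - v) <= 2 * dotv u u + 2 * dotv v v.
Proof.
by have := dotv_sqrD_le u (- v); rewrite dotvNl !(dotvC _ (- v)) dotvNl opprK.
Qed.

Lemma dotv_unit_sqr_le u h : norm2 h = 1 -> dotv u h ^+ 2 <= dotv u u.
Proof.
move=> /norm2_unit hh; have := dotv_ge0 (u - dotv u h *: h).
by rewrite dotv_sqr_expand hh; lra.
Qed.

Lemma dotv_unit_ge u h : norm2 h = 1 -> - norm2 u <= dotv u h.
Proof.
move=> /(dotv_unit_sqr_le u); rewrite -sqr_norm2 => le_sq.
have := norm2_ge0 u; nra.
Qed.

End Dotv.

Section ApproxSeparation.
Variables (R : realType) (d : nat).
Variable C : 'cV[R]_d -> Prop.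
Hypothesis C_convex :
  forall u v (t : R), C u -> C v -> 0 <= t <= 1 -> C (u + t *: (v - u)).
Hypothesis C_nonempty : exists w, C w.
Variable x : 'cV[R]_d.

Let dist_set := [set r : R | exists w, C w /\ r = norm2 (x - w)]%classic.

Definition dist_to : R := inf dist_set.

Let dist_set_lbound : has_lbound dist_set.
Proof. by exists 0 => _ [w [_ ->]]; apply: norm2_ge0. Qed.

Let dist_set_nonempty : (dist_set !=set0)%classic.
Proof. by have [w Cw] := C_nonempty; exists (norm2 (x - w)), w. Qed.

Lemma dist_to_ge0 : 0 <= dist_to.
Proof. by apply: lb_le_inf => // _ [w [_ ->]]; apply: norm2_ge0. Qed.

Lemma dist_to_le w : C w -> dist_to <= norm2 (x - w).
Proof. by move=> Cw; apply: ge_inf => //; exists w. Qed.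

Lemma dist_to_sqr_approx (s : R) : 0 < s ->
  exists2 w, C w & dotv (x - w) (x - w) <= dist_to ^+ 2 + s.
Proof.
move=> s_gt0; set D := dist_to; have D_ge0 : 0 <= D := dist_to_ge0.
set eta := Num.min 1 (s / (2 * D + 1)).
have eta_gt0 : 0 < eta by rewrite lt_min ltr01 divr_gt0 //; lra.
have eta_le1 : eta <= 1 by rewrite ge_min lexx.
have eta_s : eta * (2 * D + 1) <= s.
  by rewrite -ler_pdivlMr ?ge_min ?lexx ?orbT //; lra.
have [_ [w [Cw ->]] lt_r] : exists2 r, dist_set r & r < D + eta.
  by apply: inf_lt => //; lra.
exists w => //; rewrite -sqr_norm2.
have := norm2_ge0 (x - w); nra.
Qed.

(* The segment from [w] towards [y] stays in [C], so it cannot get much closer to [x]. *)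
Lemma near_min_variational w y (s t : R) :
  C w -> C y -> dotv (x - w) (x - w) <= dist_to ^+ 2 + s -> 0 <= t <= 1 ->
  2 * t * dotv (x - w) (y - w) <= s + t ^+ 2 * dotv (y - w) (y - w).
Proof.
move=> Cw Cy near t01.
have Cwt := C_convex Cw Cy t01.
have := dist_to_le Cwt; rewrite opprD addrA => le_D.
have : dist_to ^+ 2 <= dotv (x - w - t *: (y - w)) (x - w - t *: (y - w)).
  by rewrite -sqr_norm2; have := dist_to_ge0; nra.
rewrite dotv_sqr_expand; lra.
Qed.

Lemma near_min_obtuse (B delta : R) : 0 <= B -> 0 < delta ->
  exists2 w, C w & forall y, C y -> dotv (y - x) (y - x) <= B ->
    dotv (x - w) (y - w) <= delta.
Proof.
move=> B_ge0 delta_gt0; set D := dist_to.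
set M := 2 * B + 2 * D ^+ 2 + 2.
have M_gt0 : 0 < M by rewrite /M; have := sqr_ge0 D; lra.
(* [s / t <= delta] and [t * M <= delta] bound both terms of [near_min_variational]. *)
set t := Num.min 1 (delta / M).
have t_gt0 : 0 < t by rewrite lt_min ltr01 divr_gt0.
have t01 : 0 <= t <= 1 by rewrite ltW // ge_min lexx.
have tM : t * M <= delta by rewrite -ler_pdivlMr ?ge_min ?lexx ?orbT.
set s := Num.min 1 (t * delta).
have s_gt0 : 0 < s by rewrite lt_min ltr01 mulr_gt0.
have s_le1 : s <= 1 by rewrite ge_min lexx.
have s_le : s <= t * delta by rewrite ge_min lexx orbT.
have [w Cw near] := dist_to_sqr_approx s_gt0.
exists w => // y Cy yB.
have eM : dotv (y - w) (y - w) <= M.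
  have -> : y - w = (y - x) + (x - w) by rewrite addrA subrK.
  by have := dotv_sqrD_le (y - x) (x - w); rewrite /M; lra.
have := near_min_variational Cw Cy near t01.
have : t * (t * dotv (y - w) (y - w)) <= t * delta.
  by rewrite ler_pM2l //; apply: le_trans tM; rewrite ler_pM2l.
nra.
Qed.

Lemma approx_separation (B eps : R) : 0 <= B -> 0 < eps -> 0 < dist_to ->
  exists h, norm2 h = 1 /\ forall y, C y -> dotv (y - x) (y - x) <= B ->
    dotv (y - x) h <= - dist_to + eps.
Proof.
move=> B_ge0 eps_gt0 D_gt0; set D := dist_to.
have [w Cw obtuse] := near_min_obtuse B_ge0 (mulr_gt0 eps_gt0 D_gt0).
set u := x - w; set r := norm2 u.
have D_le_r : D <= r := dist_to_le Cw.
have r_gt0 : 0 < r by lra.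
have uu : dotv u u = r ^+ 2 by rewrite sqr_norm2.
exists (r^-1 *: u); split.
  rewrite /norm2 dotvZl dotvZr uu.
  have -> : r^-1 * (r^-1 * r ^+ 2) = 1 by field; lra.
  exact: sqrtr1.
move=> y Cy yB; have c_le := obtuse y Cy yB.
have -> : y - x = (y - w) - u by rewrite /u opprB addrA subrK.
rewrite dotvZr dotvBl (dotvC (y - w)) uu mulrC ler_pdivrMr //.
have : eps * D <= eps * r by rewrite ler_pM2l.
nra.
Qed.

End ApproxSeparation.

Section ConvOthers.
Variables (R : realType) (d K : nat) (W : 'M[R]_(d, K)) (k : 'I_K).

Lemma conv_others_convex u v (t : R) :
  conv_others W k u -> conv_others W k v -> 0 <= t <= 1 ->
  conv_others W k (u + t *: (v - u)).
Proof.
move=> [a [a_ge0 [ak [a1 ->]]]] [b [b_ge0 [bk [b1 ->]]]] /andP[t_ge0 t_le1].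
exists (fun j => (1 - t) * a j + t * b j); split.
  by move=> j; rewrite addr_ge0 ?mulr_ge0 ?subr_ge0.
split; first by rewrite ak bk; ring.
split; first by rewrite big_split /= -!mulr_sumr a1 b1; ring.
set U := \sum_(j < K) a j *: col j W; set V := \sum_(j < K) b j *: col j W.
have -> : U + t *: (V - U) = (1 - t) *: U + t *: V.
  by rewrite scalerBr scalerBl scale1r addrCA addrC.
rewrite !scaler_sumr -big_split /=.
by apply: eq_bigr => j _; rewrite !scalerA -scalerDl.
Qed.

Lemma conv_others_col j : j != k -> conv_others W k (col j W).
Proof.
move=> jk; exists (fun i => (i == j)%:R); split; first by move=> i; case: (i == j).
split; first by rewrite eq_sym (negbTE jk).
split; first by rewrite (bigD1 j) //= eqxx big1 ?addr0 // => i /negbTE ->.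
by rewrite (bigD1 j) //= eqxx scale1r big1 ?addr0 // => i /negbTE ->; rewrite scale0r.
Qed.

Lemma dotv_conv_others_le h w (m : R) :
  (forall j, j != k -> dotv (col j W - col k W) h <= m) ->
  conv_others W k w -> dotv (w - col k W) h <= m.
Proof.
move=> le_m [a [a_ge0 [ak [a1 ->]]]].
have -> : \sum_(j < K) a j *: col j W - col k W =
    \sum_(j < K) a j *: (col j W - col k W).
  by under [RHS]eq_bigr do rewrite scalerBr; rewrite sumrB -scaler_suml a1 scale1r.
rewrite dotv_suml -[m]mul1r -a1 mulr_suml; apply: ler_sum => j _.
have [->|jk] := eqVneq j k; first by rewrite ak !mul0r.
by rewrite ler_wpM2l ?le_m.
Qed.

Lemma dist_others_to : dist_others W k = dist_to (conv_others W k) (col k W).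
Proof. by []. Qed.

End ConvOthers.

Section UnitColumns.
Variables (R : realType) (d K : nat) (W : 'M[R]_(d, K)).
Hypothesis W_OB : OB W.

Lemma dotv_colB_le4 i j : dotv (col i W - col j W) (col i W - col j W) <= 4.
Proof.
have := dotv_sqrB_le (col i W) (col j W).
by rewrite (norm2_unit (W_OB i)) (norm2_unit (W_OB j)); lra.
Qed.

Lemma dist_others_separation (k : 'I_K) (eps : R) :
  (exists j, j != k) -> 0 < eps ->
  exists h, norm2 h = 1 /\
    forall j, j != k -> dotv (col j W - col k W) h <= - dist_others W k + eps.
Proof.
move=> [j0 j0k] eps_gt0.
have conv_ne : exists w, conv_others W k w by exists (col j0 W); apply: conv_others_col.
have D_ge0 := dist_to_ge0 conv_ne (col k W); rewrite -dist_others_to in D_ge0.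
have [D_le|D_gt] := lerP (dist_others W k) eps.
  exists (col k W); split=> // j _.
  have := dotv_unit_sqr_le (col j W) (W_OB k).
  by rewrite dotvBl (norm2_unit (W_OB j)) (norm2_unit (W_OB k)); nra.
have [|h [h1 sep]] := approx_separation (@conv_others_convex _ _ _ W k) conv_ne
    (x := col k W) (ler0n _ 4) eps_gt0; first by rewrite -dist_others_to; lra.
exists h; split=> // j jk.
by apply: sep; [apply: conv_others_col | apply: dotv_colB_le4].
Qed.

End UnitColumns.

Section HardMaxBounds.
Variables (R : realType) (d K n : nat).
Hypotheses (K_ge2 : (2 <= K)%N) (n_gt0 : (0 < n)%N).

Lemma exists_neq (k : 'I_K) : exists j : 'I_K, j != k.
Proof.
have K_gt0 : (0 < K)%N by apply: leq_trans K_ge2.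
have [<-|] := eqVneq (Ordinal K_gt0) k; last by exists (Ordinal K_gt0).
by exists (Ordinal K_ge2).
Qed.

Lemma HardMax_ge (W : 'M[R]_(d, K)) (H : 'M[R]_(d, K * n)) k i k' :
  OB W -> OB H -> k' != k ->
  dotv (col k' W - col k W) (hcol H k i) <= HardMax W H.
Proof.
move=> W_OB H_OB k'k; apply: ub_le_sup; last by exists k, i, k'.
exists 2 => _ [a [b [c [_ ->]]]].
have := dotv_unit_sqr_le (col c W - col a W) (H_OB (mxvec_index a b)).
have := dotv_colB_le4 W_OB c a; rewrite /hcol; nra.
Qed.

Lemma dist_others_ge_NHardMax (W : 'M[R]_(d, K)) (H : 'M[R]_(d, K * n)) k :
  OB W -> OB H -> - HardMax W H <= dist_others W k.
Proof.
move=> W_OB H_OB; have [j jk] := exists_neq k.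
apply: lb_le_inf.
  by exists (norm2 (col k W - col j W)), (col j W); split; first exact: conv_others_col.
move=> _ [w [w_conv ->]]; pose i : 'I_n := Ordinal n_gt0.
have := dotv_unit_ge (w - col k W) (H_OB (mxvec_index k i)).
have := dotv_conv_others_le (fun j jk => HardMax_ge i W_OB H_OB jk) w_conv.
by rewrite norm2B /hcol; lra.
Qed.

Lemma rho_ovr_le_dist (W : 'M[R]_(d, K)) k : rho_ovr W <= dist_others W k.
Proof.
apply: ge_inf; last by exists k.
exists 0 => _ [k' ->]; have [j jk'] := exists_neq k'.
by apply: dist_to_ge0; exists (col j W); apply: conv_others_col.
Qed.

Lemma HardMax_ge_Nrho (W : 'M[R]_(d, K)) (H : 'M[R]_(d, K * n)) :
  OB W -> OB H -> - rho_ovr W <= HardMax W H.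
Proof.
move=> W_OB H_OB; rewrite lerNl; apply: lb_le_inf.
  by exists (dist_others W (Ordinal (ltnW K_ge2))), (Ordinal (ltnW K_ge2)).
by move=> _ [k ->]; apply: dist_others_ge_NHardMax.
Qed.

Definition col_rep (f : 'I_K -> 'cV[R]_d) : 'M[R]_(d, K * n) :=
  \matrix_(l, c) mxvec (\matrix_(k < K, i < n) f k l 0) 0 c.

Lemma hcol_col_rep f k i : hcol (col_rep f) k i = f k.
Proof. by apply/matrixP => l b; rewrite !mxE mxvecE mxE (ord1 b). Qed.

Lemma OB_col_rep f : (forall k, norm2 (f k) = 1) -> OB (col_rep f).
Proof.
by move=> f1 c; case/mxvec_indexP: c => k i; rewrite -[col _ _]/(hcol _ k i) hcol_col_rep.
Qed.

Lemma HardMax_approx_Nrho (W : 'M[R]_(d, K)) (eps : R) : OB W -> 0 < eps ->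
  exists H : 'M[R]_(d, K * n), OB H /\ HardMax W H <= - rho_ovr W + eps.
Proof.
move=> W_OB eps_gt0.
have /choice [f f_sep] : forall k, exists h, norm2 h = 1 /\
    forall j, j != k -> dotv (col j W - col k W) h <= - dist_others W k + eps.
  by move=> k; apply: dist_others_separation => //; apply: exists_neq.
exists (col_rep f); split; first by apply: OB_col_rep => k; case: (f_sep k).
apply: ge_sup.
  pose k0 := Ordinal (ltnW K_ge2); have [j jk0] := exists_neq k0.
  pose i0 := Ordinal n_gt0.
  by exists (dotv (col j W - col k0 W) (hcol (col_rep f) k0 i0)), k0, i0, j.
move=> _ [k [i [k' [k'k ->]]]]; rewrite hcol_col_rep.
by have := (f_sep k).2 k' k'k; have := rho_ovr_le_dist W k; lra.
Qed.

End HardMaxBounds.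

Theorem mainTheorem2 (R : realType) (d K n : nat)
  (hd : (1 <= d)%N) (hK : (2 <= K)%N) (hn : (1 <= n)%N)
  (Wstar : 'M[R]_(d, K)) (Hstar : 'M[R]_(d, K * n)) :
  hardmax_optimal Wstar Hstar -> softmax_code Wstar.
Proof.
move=> [W_OB [H_OB optimal]]; split=> // W' W'_OB.
apply/ler_addgt0Pr => eps eps_gt0.
have [H' [H'_OB H'_le]] := HardMax_approx_Nrho hK hn W'_OB eps_gt0.
have := HardMax_ge_Nrho hK hn W_OB H_OB.
have := optimal W' H' W'_OB H'_OB.
lra.
Qed.
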